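(* There is no $(v,[k_1,k_2,1],\lambda)$ Hadamard partitioned difference family, for any integers $v,k_1,k_2,\lambda$.
   Context: $G$ is a finite group of order $v$ written additively, with difference $x-y:=x+(-y)$. For $B\subseteq G$, $\Delta B$ is the multiset $\{x-y: x,y\in B, x\neq y\}$; for $\mathcal{F}=\{B_1,\dots,B_t\}$, $\Delta\mathcal{F}$ is the multiset union of the $\Delta B_i$. A $(v,[k_1,\dots,k_t],\lambda)$ partitioned difference family (PDF) is a collection $\{B_1,\dots,B_t\}$ of subsets partitioning some group $G$ of order $v$ with $|B_i|=k_i$ such that $\Delta\mathcal{F}$ contains every non-zero element of $G$ exactly $\lambda$ times. It is Hadamard (HPDF) if $v=2\lambda$. *)

From mathcomp Require Import all_boot all_fingroup.
Set Implicit Arguments. Unset Strict Implicit. Unset Printing Implicit Defensive.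
Local Open Scope group_scope.

(* The paper writes the group additively with x - y := x + (-y); in
   MathComp's multiplicative finGroupType notation this is x * y^-1. *)

Definition diff_mult (gT : finGroupType) (B : {set gT}) (g : gT) : nat :=
  #|[set p : gT * gT | [&& p.1 \in B, p.2 \in B, p.1 != p.2 & p.1 * p.2^-1 == g]]|.

Definition is_PDF (gT : finGroupType) (G : {group gT}) (F : seq {set gT})
    (v : nat) (ks : seq nat) (lambda : nat) : Prop :=
  #|G| = v /\
      size F = size ks /\
      (forall i, i < size F -> nth set0 F i != set0) /\
      (forall i j, i < size F -> j < size F -> i != j ->
         [disjoint nth set0 F i & nth set0 F j]) /\
      \bigcup_(B <- F) B = G :> {set gT} /\
      (forall i, i < size F -> #|nth set0 F i| = nth 0%N ks i) /\
      (forall g, g \in G -> g != 1 -> \sum_(B <- F) diff_mult B g = lambda).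

Definition is_HPDF (gT : finGroupType) (G : {group gT}) (F : seq {set gT})
    (v : nat) (ks : seq nat) (lambda : nat) : Prop :=
  is_PDF G F v ks lambda /\ v = (2 * lambda)%N.

(* Translate the family so that its singleton block is {1}, and let E, of size
   k, be one of the two other blocks, so that the third one is G minus E and 1.
   Counting differences gives, for g <> 1,
     2 |E :&: gE| + [g \in E] + [g^-1 \in E] + lambda = 2k + 2;
   an involution of G (whose order 2 lambda is even) shows that lambda is even,
   hence E = E^-1.  The group matrix A = ([x y^-1 \in E])_(x, y \in G) then
   satisfies AJ = JA = kJ, tr A = 0 and 2 A^2 + 2 A = (lambda - 2) I
   + (2k + 2 - lambda) J.  On the all-ones vector this yields
   (2 lambda - 1 - 2k)^2 = 3 (2 lambda - 1); on its complement A has the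
   eigenvalues (-1 +- sqrt(2 lambda - 3)) / 2 with integral multiplicities, and
   tr A = 0 gives (2 lambda - 1 - 2k)^2 = (2 lambda - 3) x^2 for an integer x.
   Hence 2 lambda - 3 divides 6, and the remaining cases force k = 0 or
   k = 2 lambda - 2, i.e. an empty block. *)

From mathcomp Require Import all_boot all_order all_algebra all_fingroup pgroup algC.
From mathcomp Require Import ring zify.
Set Implicit Arguments. Unset Strict Implicit. Unset Printing Implicit Defensive.
Import GRing.Theory Num.Theory.
Local Open Scope ring_scope.

Lemma eq_of_lincomb (R : pzRingType) (c p q x y : R) :
  p = q -> x - y = c * (p - q) -> x = y.
Proof. by move=> -> /eqP; rewrite subrr mulr0 subr_eq0 => /eqP. Qed.

Section IdempotentTrace.
Variable F : fieldType.

Lemma mxtrace_idem n (P : 'M[F]_n) : P *m P = P -> \tr P = (\rank P)%:R.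
Proof.
move=> PP; set C := col_base P; set R := row_base P.
have defP : C *m R = P := mulmx_base P.
have [D DC] : exists D, D *m C = 1%:M by apply/row_fullP/col_base_full.
have freeR : row_free R := row_base_free P.
clearbody C R.
have RCR : R *m C *m R = R.
  have CRCR : C *m R *m (C *m R) = C *m R by rewrite defP.
  by have := congr1 (mulmx D) CRCR; rewrite !mulmxA DC !mul1mx.
have RC : R *m C = 1%:M by apply: (row_free_inj freeR); rewrite /= mul1mx.
by rewrite -{1}defP mxtrace_mulC RC mxtrace1.
Qed.

Lemma mxtrace_idem_scale n (C : 'M[F]_n) a :
  C *m C = a *: C -> a != 0 -> \tr C = a * (\rank C)%:R.
Proof.
move=> CC a0; have idP : (a^-1 *: C) *m (a^-1 *: C) = a^-1 *: C.
  by rewrite -scalemxAl -scalemxAr CC !scalerA mulrAC mulVf ?mul1r.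
have := mxtrace_idem idP; rewrite mxtraceZ (eqmx_scale _ (invr_neq0 a0)) => <-.
by rewrite mulrA mulfV ?mul1r.
Qed.

End IdempotentTrace.

Lemma mxtrace_const1 (R : pzSemiRingType) n : \tr (const_mx 1 : 'M[R]_n) = n%:R :> R.
Proof.
by rewrite /mxtrace (eq_bigr (fun=> 1)) => [|i _]; rewrite ?mxE // sumr_const card_ord.
Qed.

Lemma const_mx1_mul (R : pzSemiRingType) n :
  (const_mx 1 : 'M[R]_n) *m const_mx 1 = n%:R *: (const_mx 1 : 'M_n).
Proof.
apply/matrixP => i j; rewrite !mxE (eq_bigr (fun=> 1)) => [|l _]; rewrite ?mxE ?mulr1 //.
by rewrite sumr_const card_ord.
Qed.

Section QuadraticMatrix.
Variables (F : fieldType) (n : nat) (A : 'M[F]_n) (k r th th' : F).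
Let J : 'M[F]_n := const_mx 1.
Hypotheses (n_neq0 : n%:R != 0 :> F) (AJ : A *m J = k *: J) (JA : J *m A = k *: J)
  (AA : A *m A = (th + th') *: A - (th * th')%:M + r *: J).

Lemma quadratic_mx_rowsum : k ^+ 2 = (th + th') * k - th * th' + r * n%:R.
Proof.
have i0 : 'I_n by apply: (@Ordinal n 0); rewrite lt0n; apply: contraNneq n_neq0 => ->.
have := congr1 (fun M => (M *m J) i0 i0) AA.
rewrite -mulmxA AJ -scalemxAr AJ mulmxDl mulmxBl -!scalemxAl AJ const_mx1_mul.
rewrite mul_scalar_mx !mxE => e.
by apply: (eq_of_lincomb (c := 1) e); ring.
Qed.

(* [C / (th' - th)] is the projection onto the th'-eigenspace of [A] on the
   complement of the all-ones vector; its rank [m] is the multiplicity of th'. *)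
Lemma quadratic_mx_trace : th' != th ->
  exists m : nat, \tr A = k + m%:R * th' + (n%:R - 1 - m%:R) * th.
Proof.
move=> th_neq; set s := (k - th) / n%:R; set C := A - th%:M - s *: J.
have r_def : r = (k ^+ 2 - (th + th') * k + th * th') / n%:R.
  by rewrite quadratic_mx_rowsum; field.
have CC : C *m C = (th' - th) *: C.
  rewrite !(mulmxBl, mulmxBr) -!scalemxAl -!scalemxAr AA AJ JA const_mx1_mul.
  rewrite !mul_mx_scalar !mul_scalar_mx.
  by apply/matrixP => i j; rewrite !mxE r_def /s; case: (i == j); field.
have trC : \tr C = \tr A - k - (n%:R - 1) * th.
  by rewrite /C !raddfB /= mxtraceZ mxtrace_scalar mxtrace_const1 /s; field.
have := mxtrace_idem_scale CC; rewrite subr_eq0 trC => /(_ th_neq) trA.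
by exists (\rank C); apply: (eq_of_lincomb (c := 1) trA); ring.
Qed.

End QuadraticMatrix.

Lemma hadamard_singleton_arith (l k x : int) : 1 <= k -> k + 2 <= 2 * l ->
  (2 * l - 1 - 2 * k) ^+ 2 = 3 * (2 * l - 1) ->
  (2 * l - 1 - 2 * k) ^+ 2 = (2 * l - 3) * x ^+ 2 -> False.
Proof.
move=> k1 kl e1 e2.
have [y ey] : {y | y = x ^+ 2 - 3} by exists (x ^+ 2 - 3).
have e3 : (2 * l - 3) * y = 6 by rewrite ey mulrBr -e2 e1; ring.
have y1 : 1 <= y by clear -e3 k1 kl; nia.
have : l = 2 \/ l = 3 \/ l = 4 by clear -e3 y1 k1 kl; nia.
case=> [|[|]] el; subst l; last by lia.
  by clear -e1 k1 kl; nia.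
have x5 : x ^+ 2 = 5 by lia.
by clear -x5; case: (lerP x 2) => ?; case: (lerP (-2) x) => ?; nia.
Qed.

Section DiffMult.
Local Open Scope group_scope.
Variable gT : finGroupType.
Implicit Types (B S : {set gT}) (a g : gT).

Lemma diff_multE B g : g != 1 -> diff_mult B g = #|B :&: g *: B|.
Proof.
move=> g1; have inj_pair : injective (fun x : gT => (x, g^-1 * x)) by move=> x y [].
rewrite -(card_imset _ inj_pair) /diff_mult; apply: eq_card => -[x y].
rewrite inE /=; apply/and4P/imsetP => [[xB yB xy /eqP <-]|[u /setIP[uB]]].
  by exists x; rewrite ?inE ?mem_lcoset invMg invgK mulgKV ?xB ?yB.
rewrite mem_lcoset => guB [-> ->]; split=> //; last by rewrite invMg invgK mulKVg.
by rewrite -{1}[u]mul1g (inj_eq (mulIg u)) eq_sym eq_invg1.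
Qed.

Lemma diff_mult_rcoset B a g : diff_mult (B :* a) g = diff_mult B g.
Proof.
pose shift (p : gT * gT) := (p.1 * a, p.2 * a).
have inj_shift : injective shift by move=> [x y] [x' y'] [/mulIg-> /mulIg->].
rewrite /diff_mult -(card_preimset _ inj_shift); apply: eq_card => -[x y].
by rewrite !inE /= !mem_rcoset !mulgK (inj_eq (mulIg _)) invMg mulgA mulgK.
Qed.

Lemma diff_mult_set1 a g : diff_mult [set a] g = 0%N.
Proof.
apply/eqP; rewrite cards_eq0; apply/eqP/setP => -[x y]; rewrite !inE /=.
by apply/and4P => -[/eqP-> /eqP->]; rewrite eqxx.
Qed.

Lemma card_meet_setD (G : {group gT}) S g : S \subset G -> g \in G ->
  (#|(G :\: S) :&: g *: (G :\: S)| + 2 * #|S| = #|G| + #|S :&: g *: S|)%N.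
Proof.
move=> sSG gG; have sgSG : g *: S \subset G by rewrite -(lcoset_id gG) lcosetS.
have -> : g *: (G :\: S) = G :\: g *: S.
  by apply/setP => x; rewrite !(inE, mem_lcoset) groupMl ?groupV.
rewrite -setDUr cardsDS ?subUset ?sSG //.
have UG : (#|S :|: g *: S| <= #|G|)%N by rewrite subset_leq_card // subUset sSG.
have := cardsUI S (g *: S); rewrite card_lcoset => UI.
by rewrite mul2n -addnn -UI addnA subnK.
Qed.

Lemma card_meet_setU1 S g : 1 \notin S -> g != 1 ->
  #|(1 |: S) :&: g *: (1 |: S)| = (#|S :&: g *: S| + (g \in S) + (g^-1 \in S))%N.
Proof.
move=> S1 g1; set X1 := _ :&: _; set X := S :&: _.
rewrite (cardD1 1 X1) (cardD1 g [predD1 X1 & 1]) (cardD1 1 X) (cardD1 g [predD1 X & 1]).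
have -> : #|[predD1 [predD1 X1 & 1] & g]| = #|[predD1 [predD1 X & 1] & g]|.
  apply: eq_card => y; rewrite !(inE, mem_lcoset).
  case: eqP => //= yg; case: eqP => //= _.
  by have /negbTE-> : g^-1 * y != 1 by rewrite -eq_mulVg1 eq_sym; apply/eqP.
rewrite !(inE, mem_lcoset) mulg1 mulVg eqxx eq_invg1 (negbTE S1) (negbTE g1) /=.
rewrite andbT andbF /= !add0n addnC; congr (_ + _); exact: addnC.
Qed.

End DiffMult.

Definition group_mx (R : pzSemiRingType) (gT : finGroupType) (G : {group gT})
    (E : {set gT}) : 'M[R]_#|G| :=
  \matrix_(i, j) ((enum_val i * (enum_val j)^-1)%g \in E)%:R.

Section GroupMatrix.
Variables (R : pzSemiRingType) (gT : finGroupType) (G : {group gT}) (E : {set gT}).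
Hypothesis sEG : E \subset G.
Let A := group_mx R G E.
Let J : 'M[R]_#|G| := const_mx 1.

Lemma sumr_indicator (B : {set gT}) :
  B \subset G -> \sum_(x in G) (x \in B)%:R = #|B|%:R :> R.
Proof.
move=> sBG; rewrite (eq_bigr (fun x => if x \in B then 1 else 0)) => [|x _]; last first.
  by case: (x \in B).
rewrite -big_mkcondr (eq_bigl [in B]) ?sumr_const // => x /=.
by apply/andb_idl/(subsetP sBG).
Qed.

Lemma sum_group_invMl (F : gT -> R) x : x \in G ->
  \sum_(y in G) F y = \sum_(u in G) F (u^-1 * x)%g.
Proof.
move=> xG; rewrite (reindex_inj (inj_comp (mulIg x) (@invg_inj gT))).
by apply: eq_bigl => u; rewrite /= groupMr // groupV.
Qed.

Lemma sum_group_mulr (F : gT -> R) x : x \in G ->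
  \sum_(y in G) F y = \sum_(u in G) F (u * x)%g.
Proof.
by move=> xG; rewrite (reindex_inj (mulIg x)); apply: eq_bigl => u; rewrite /= groupMr.
Qed.

Lemma group_mx_const1 : A *m J = #|E|%:R *: J.
Proof.
apply/matrixP => i j; rewrite !mxE; under eq_bigr do rewrite !mxE mulr1.
rewrite -(big_enum_val (fun y => ((enum_val i * y^-1)%g \in E)%:R)).
rewrite (sum_group_invMl _ (enum_valP i)) -(sumr_indicator sEG) mulr1.
by apply: eq_bigr => u _; rewrite invMg invgK mulKVg.
Qed.

Lemma const1_group_mx : J *m A = #|E|%:R *: J.
Proof.
apply/matrixP => i j; rewrite !mxE; under eq_bigr do rewrite !mxE mul1r.
rewrite -(big_enum_val (fun y => ((y * (enum_val j)^-1)%g \in E)%:R)).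
rewrite (sum_group_mulr _ (enum_valP j)) -(sumr_indicator sEG) mulr1.
by apply: eq_bigr => u _; rewrite mulgK.
Qed.

Lemma mxtrace_group_mx : \tr A = (1%g \in E)%:R *+ #|G|.
Proof.
rewrite /mxtrace (eq_bigr (fun=> (1%g \in E)%:R)) ?sumr_const ?card_ord // => i _.
by rewrite mxE mulgV.
Qed.

Lemma group_mx_sqrE : (forall g, ((g^-1)%g \in E) = (g \in E)) -> forall i j,
  (A *m A) i j = #|E :&: ((enum_val i * (enum_val j)^-1) *: E)%g|%:R.
Proof.
move=> symE i j; rewrite !mxE; under eq_bigr do rewrite !mxE.
rewrite -(big_enum_val (fun y => ((enum_val i * y^-1)%g \in E)%:R *
                                 ((y * (enum_val j)^-1)%g \in E)%:R)).
have sEgEG := subset_trans (subsetIl E ((enum_val i * (enum_val j)^-1) *: E)%g) sEG.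
rewrite (sum_group_invMl _ (enum_valP i)) -(sumr_indicator sEgEG).
apply: eq_bigr => u _; rewrite invMg invgK mulKVg -natrM mulnb inE mem_lcoset.
by rewrite -(symE (_ * u)%g) invMg invgK mulgA.
Qed.

End GroupMatrix.

Section HadamardSingleton.
Local Open Scope group_scope.
Variables (gT : finGroupType) (G : {group gT}) (E : {set gT}) (lam : nat).
Let D := G :\: (1 |: E).
Hypotheses (sEG : E \subset G) (notE1 : 1 \notin E) (cardG : #|G| = (2 * lam)%N)
  (diff_sum : forall g, g \in G -> g != 1 -> (diff_mult E g + diff_mult D g)%N = lam).

Lemma card_meet_relation g : g \in G -> g != 1 ->
  (2 * #|E :&: g *: E| + (g \in E) + (g^-1 \in E) + lam = 2 * #|E| + 2)%N.
Proof.
move=> gG g1; have := diff_sum gG g1; rewrite !diff_multE //.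
have s1EG : 1 |: E \subset G by rewrite subUset sub1set group1 sEG.
have := card_meet_setD s1EG gG; rewrite card_meet_setU1 // cardsU1 notE1 cardG.
(* [lia] would not identify the differently elaborated copies of these cardinals. *)
rewrite -/D; move: #|E :&: g *: E| #|D :&: g *: D| #|E| (g \in E : nat) (g^-1 \in E : nat).
lia.
Qed.

(* Comparing the relation at [g] with the one at an involution [t], which shows
   that [lam] is even. *)
Lemma mem_invg_block g : (g^-1 \in E) = (g \in E).
Proof.
have two_dvdG : (2 %| #|G|)%N by rewrite cardG dvdn_mulr.
have [t tG ot] := Cauchy (isT : prime 2) two_dvdG.
have tinv : t^-1 = t by rewrite invg_expg ot.
have t1 : t != 1 by rewrite -order_eq1 ot.
have := card_meet_relation tG t1; rewrite tinv => lam_even.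
case: (boolP (g \in G)) => [gG|gNG]; last first.
  by rewrite !(contraNF (subsetP sEG _)) ?groupV.
have [->|g1] := eqVneq g 1; first by rewrite invg1.
have := card_meet_relation gG g1; move: lam_even.
by case: (t \in E); case: (g \in E); case: (g^-1 \in E) => //=; lia.
Qed.

Section MatrixArgument.
Local Open Scope ring_scope.

Let A := group_mx algC G E.
Let J : 'M[algC]_#|G| := const_mx 1.

Lemma group_mx_sqr_hpdf :
  A *m A = (-1) *: A - ((2 - lam%:R) / 2)%:M + ((2 * #|E|%:R + 2 - lam%:R) / 2) *: J.
Proof.
apply/matrixP => i j; rewrite group_mx_sqrE //; last exact: mem_invg_block.
rewrite !mxE; have [<-|ij] := eqVneq i j.
  by rewrite mulgV lcoset1 setIid (negbTE notE1) /=; field.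
set x := enum_val i; set y := enum_val j.
have gG : (x * y^-1)%g \in G by rewrite groupM ?groupV ?enum_valP.
have g1 : (x * y^-1)%g != 1%g.
  by rewrite -eq_mulgV1; apply: contra ij => /eqP/enum_val_inj->.
have := card_meet_relation gG g1; rewrite mem_invg_block => /(congr1 (fun n => n%:R : algC)).
by rewrite !natrD => hN; apply: (eq_of_lincomb (c := 1 / 2) hN) => /=; field.
Qed.

Lemma hadamard_singleton_diophantine : exists m : nat,
  (2 * lam%:Z - 1 - 2 * #|E|%:Z) ^+ 2 = 3 * (2 * lam%:Z - 1) /\
  (2 * lam%:Z - 1 - 2 * #|E|%:Z) ^+ 2 =
    (2 * lam%:Z - 3) * (2 * m%:Z - 2 * lam%:Z + 1) ^+ 2.
Proof.
set k := #|E|; set t := sqrtC (2 * lam%:R - 3 : algC).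
have t2 : t ^+ 2 = 2 * lam%:R - 3 := sqrtCK _.
pose th := (-1 - t) / 2; pose th' := (-1 + t) / 2.
pose r := (2 * k%:R + 2 - lam%:R) / 2 : algC.
have sum_th : th + th' = -1 by rewrite /th /th'; field.
have prod_th : th * th' = (2 - lam%:R) / 2.
  by apply: (eq_of_lincomb (c := -1 / 4) t2); rewrite /th /th'; field.
have AJ : A *m J = k%:R *: J := group_mx_const1 algC sEG.
have JA : J *m A = k%:R *: J := const1_group_mx algC sEG.
have AA : A *m A = (th + th') *: A - (th * th')%:M + r *: J.
  by rewrite sum_th prod_th; exact: group_mx_sqr_hpdf.
have n0 : #|G|%:R != 0 :> algC by rewrite pnatr_eq0 -lt0n cardG_gt0.
have th_neq : th' != th.
  rewrite -subr_eq0 (_ : th' - th = t); last by rewrite /th /th'; field.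
  rewrite sqrtC_eq0 subr_eq0 -natrM eqr_nat; apply/eqP; lia.
have rowsum := quadratic_mx_rowsum n0 AJ AA.
rewrite sum_th prod_th cardG natrM in rowsum.
have [m trA] := quadratic_mx_trace n0 AJ JA AA th_neq.
rewrite mxtrace_group_mx (negbTE notE1) mul0rn cardG natrM in trA.
have d_eq : 2 * lam%:R - 1 - 2 * k%:R = t * (2 * m%:R - 2 * lam%:R + 1) :> algC.
  by apply: (eq_of_lincomb (c := 2) trA); rewrite /th /th'; field.
have d_sq := congr1 (fun x => x ^+ 2) d_eq; rewrite /= exprMn t2 in d_sq.
exists m; split; apply: (@intr_inj algC).
  by apply: (eq_of_lincomb (c := 4) rowsum); rewrite /r; field.
by apply: (eq_of_lincomb (c := 1) d_sq); ring.
Qed.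

Lemma hadamard_singleton_trivial : E = set0 \/ D = set0.
Proof.
have [m [e1 e2]] := hadamard_singleton_diophantine.
have [->|E0] := eqVneq E set0; first by left.
have [/eqP|D0] := posnP #|D|; first by rewrite cards_eq0 => /eqP; right.
exfalso; apply: (hadamard_singleton_arith _ _ e1 e2).
  by move: E0; rewrite -card_gt0; lia.
move: D0; rewrite cardsDS ?cardsU1 ?notE1 ?cardG ?subUset ?sub1set ?group1 ?sEG //=.
by move: #|E| => n; lia.
Qed.

End MatrixArgument.

End HadamardSingleton.

Lemma setD_cover3 (T : finType) (A B C : {set T}) :
  [disjoint A & B] -> [disjoint B & C] -> B = (A :|: (B :|: C)) :\: (C :|: A).
Proof.
move=> dAB dBC; apply/setP => x; rewrite !inE.
case: (boolP (x \in B)) => [xB|_]; last by rewrite /= orbC andNb.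
by rewrite (disjointFl dAB xB) (disjointFr dBC xB).
Qed.

Lemma rcoset_cover3 (gT : finGroupType) (G : {group gT}) (B1 B2 : {set gT}) z :
    B1 :|: (B2 :|: [set z]) = G -> [disjoint B1 & B2] -> [disjoint B2 & [set z]] ->
    [disjoint B1 & [set z]] -> let E := (B1 :* z^-1)%g in
  [/\ E \subset G, (1 \notin E)%g & (B2 :* z^-1)%g = G :\: (1%g |: E)].
Proof.
move=> cover d12 d23 d13 E.
have zG : z \in G by rewrite -cover !inE eqxx !orbT.
split.
- apply/subsetP => u; rewrite mem_rcoset invgK => uzB1.
  by rewrite -(groupMr _ zG) -cover !inE uzB1.
- by rewrite mem_rcoset invgK mul1g (disjointFl d13) ?set11.
rewrite {1}(setD_cover3 d12 d23) cover.
apply/setP => u; rewrite !(inE, mem_rcoset) invgK groupMr //.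
by rewrite -{2}[z]mul1g (inj_eq (mulIg z)).
Qed.

Theorem corollary4p3 (gT : finGroupType) (G : {group gT}) (F : seq {set gT})
    (v k1 k2 lambda : nat) :
  ~ is_HPDF G F v [:: k1; k2; 1%N] lambda.
Proof.
case=> -[cardG [sizeF [nonempty [disj [cover [cards diffF]]]]]] v_eq.
case: F sizeF nonempty disj cover cards diffF => [|B1 [|B2 [|B3 [|]]]] //= _.
move=> nonempty disj cover cards diffF.
have /cards1P[z defB3] : #|B3| == 1%N by rewrite (cards 2%N).
subst B3; rewrite !big_cons big_nil setU0 in cover.
have [sEG notE1 B2E] := rcoset_cover3 cover (disj 0%N 1%N isT isT isT)
  (disj 1%N 2%N isT isT isT) (disj 0%N 2%N isT isT isT).
set E := (B1 :* z^-1)%g in sEG notE1 B2E.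
have diff_sum g : g \in G -> g != 1%g ->
    (diff_mult E g + diff_mult (G :\: (1%g |: E)) g)%N = lambda.
  move=> gG g1; have := diffF g gG g1; rewrite !big_cons big_nil diff_mult_set1 !addn0.
  by rewrite -B2E !diff_mult_rcoset.
have [] := hadamard_singleton_trivial sEG notE1 (etrans cardG v_eq) diff_sum => /eqP.
  by rewrite -cards_eq0 card_rcoset cards_eq0 (negbTE (nonempty 0%N isT)).
by rewrite -B2E -cards_eq0 card_rcoset cards_eq0 (negbTE (nonempty 1%N isT)).
Qed.
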